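(* Let $\mathbf{B}$ be a real $d\times n$ matrix with nonnegative entries and $\operatorname{rank}(\mathbf{B})=k+1$, where $k\ge1$, with nonzero singular values $s_1\ge\cdots\ge s_k\ge s_{k+1}>0$, and suppose $s_k>s_{k+1}$. Let $\mathbf{U}_s\in\mathbb{R}^{d\times k}$ be the matrix whose columns are orthonormal left singular vectors of $\mathbf{B}$ corresponding to $s_1,\dots,s_k$. Consider the problem $$\min_{\mathbf{V}\in\mathbb{R}^{n\times k}}\ \|\mathbf{B}-\mathbf{U}_s\mathbf{V}^T\|_F^2\quad\text{subject to}\quad \mathbf{U}_s\mathbf{V}^T\ge 0\ \text{(entrywise)}.$$ Then this problem has a unique minimizer $\mathbf{V}^\ast$, and the resulting nonnegative approximation $\mathbf{A}=\mathbf{U}_s(\mathbf{V}^\ast)^T$ is uniquely determined by $\mathbf{B}$ (i.e., it does not depend on the choice of the singular vectors).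
   Context: $\|\cdot\|_F$ denotes the Frobenius norm; a matrix inequality $\mathbf{M}\ge 0$ means all entries of $\mathbf{M}$ are nonnegative. *)

From HB Require Import structures.
From mathcomp Require Import all_boot all_order all_algebra.
Set Implicit Arguments. Unset Strict Implicit. Unset Printing Implicit Defensive.
Import Order.TTheory GRing.Theory Num.Theory.
Local Open Scope ring_scope.

Section Defs.
Variable R : rcfType.

Definition frob_norm (m n : nat) (M : 'M[R]_(m, n)) : R :=
  Num.sqrt (\sum_(i < m) \sum_(j < n) (M i j) ^+ 2).

Definition nonneg_mx (m n : nat) (M : 'M[R]_(m, n)) : Prop :=
  forall i j, 0 <= M i j.

Definition nz_singular_values (d n r : nat) (B : 'M[R]_(d, n)) (s : 'I_r -> R)
  : Prop :=
  (forall i j : 'I_r, (i <= j)%N -> s j <= s i) /\ (forall i, 0 < s i) /\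
  exists (U : 'M[R]_(d, r)) (W : 'M[R]_(n, r)),
    U^T *m U = 1%:M /\ W^T *m W = 1%:M /\
    B = U *m diag_mx (\row_i s i) *m W^T.

Definition left_singular_vector (d n : nat) (B : 'M[R]_(d, n)) (sigma : R)
  (u : 'cV[R]_d) : Prop :=
  u^T *m u = 1%:M /\
  exists v : 'cV[R]_n, v^T *m v = 1%:M /\
    B *m v = sigma *: u /\ B^T *m u = sigma *: v.

Definition nn_minimizer (d n k : nat) (B : 'M[R]_(d, n)) (Us : 'M[R]_(d, k))
  (V : 'M[R]_(n, k)) : Prop :=
  nonneg_mx (Us *m V^T) /\
  forall W : 'M[R]_(n, k), nonneg_mx (Us *m W^T) ->
    frob_norm (B - Us *m V^T) ^+ 2 <= frob_norm (B - Us *m W^T) ^+ 2.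

End Defs.

From HB Require Import structures.
From mathcomp Require Import all_boot all_order all_algebra.
From mathcomp Require Import ring lra zify.
Set Implicit Arguments. Unset Strict Implicit. Unset Printing Implicit Defensive.
Import Order.TTheory GRing.Theory Num.Theory.
Local Open Scope ring_scope.

(* Write ||M||^2 for the sum of the squared entries of M.  For an orthonormal
   frame Us (Us^T Us = 1), Pythagoras gives
       ||B - Us X||^2 = ||B - Us Us^T B||^2 + ||Us^T B - X||^2,
   so minimizing over V (with X = V^T) subject to Us V^T >= 0 is the
   Euclidean projection of Us^T B onto the polyhedral cone {X | Us X >= 0}.

   1. Existence.  For a cone {x | x G >= 0} and a set S of constraints, the
      nearest point of c to the subspace {x | x G_S = 0} is explicit
      (kerproj).  Moving from a feasible x towards the candidate of its active
      set, a ratio test either reaches a feasible candidate or activates a new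
      constraint without increasing the distance; so some feasible candidate
      beats every feasible point, and there are finitely many candidates.
   2. Uniqueness.  By the identity
       (1-t)||M||^2 + t||N||^2 = ||(1-t)M + tN||^2 + t(1-t)||M - N||^2,
      two minimizers whose midpoint is admissible coincide.
   3. Independence of the frame.  Since s_k > s_(k+1), a left singular vector
      for s_1, ..., s_k is an eigenvector of B B^T for an eigenvalue different
      from s_(k+1)^2, hence lies in the span of the first k columns of any
      compact SVD of B.  Two admissible frames thus differ by an orthogonal
      k x k matrix and span the same space, and the midpoint argument compares
      the two approximations Us V^T directly. *)

Section SumOfSquares.
Variable R : realFieldType.
Implicit Types m n : nat.

Definition sqnorm m n (M : 'M[R]_(m, n)) : R :=
  \sum_(ij : 'I_m * 'I_n) M ij.1 ij.2 ^+ 2.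

Definition dot m n (M N : 'M[R]_(m, n)) : R :=
  \sum_(ij : 'I_m * 'I_n) M ij.1 ij.2 * N ij.1 ij.2.

Lemma sqnorm_ge0 m n (M : 'M[R]_(m, n)) : 0 <= sqnorm M.
Proof. by apply: sumr_ge0 => ij _; rewrite sqr_ge0. Qed.

Lemma sqnorm_eq0 m n (M : 'M[R]_(m, n)) : sqnorm M = 0 -> M = 0.
Proof.
move/eqP; rewrite psumr_eq0 => [/allP M0|ij _]; last exact: sqr_ge0.
apply/matrixP => i j; rewrite mxE.
by have /implyP/(_ isT) := M0 (i, j) (mem_index_enum _); rewrite sqrf_eq0 => /eqP.
Qed.

Lemma sqnorm_dot m n (M : 'M[R]_(m, n)) : sqnorm M = dot M M.
Proof. by apply: eq_bigr => ij _; rewrite expr2. Qed.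

Lemma sqnormD m n (M N : 'M[R]_(m, n)) :
  sqnorm (M + N) = sqnorm M + 2 * dot M N + sqnorm N.
Proof.
rewrite /sqnorm /dot mulr_sumr -!big_split; apply: eq_bigr => ij _.
by rewrite mxE /=; ring.
Qed.

Lemma sqnorm_convex_gap m n (t : R) (M N : 'M[R]_(m, n)) :
  (1 - t) * sqnorm M + t * sqnorm N =
  sqnorm ((1 - t) *: M + t *: N) + t * (1 - t) * sqnorm (M - N).
Proof.
rewrite /sqnorm !mulr_sumr -!big_split; apply: eq_bigr => ij _.
by rewrite !mxE /=; ring.
Qed.

(* The inner product is the trace form, which lets matrix algebra act on it. *)
Lemma dot_trace m n (M N : 'M[R]_(m, n)) : dot M N = \tr (M^T *m N).
Proof.
rewrite /dot -(pair_big xpredT xpredT (fun i j => M i j * N i j)) /=.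
rewrite exchange_big; apply: eq_bigr => j _; rewrite mxE.
by apply: eq_bigr => i _; rewrite mxE.
Qed.

End SumOfSquares.

Section KernelProjection.
Variable R : realFieldType.
Implicit Types m q : nat.

Lemma gram_eq0 m q (N : 'M[R]_(m, q)) : N *m N^T = 0 -> N = 0.
Proof.
move=> NN0; apply: trmx_inj; rewrite trmx0; apply: sqnorm_eq0.
by rewrite sqnorm_dot dot_trace trmxK NN0 mxtrace0.
Qed.

(* Hence M^T M and M have the same rank (their left kernels coincide); this
   makes the normal equations below solvable. *)
Lemma mxrank_gram m q (M : 'M[R]_(m, q)) : \rank (M^T *m M) = \rank M.
Proof.
have ker_sub : (kermx (M^T *m M) <= kermx M^T)%MS.
  apply/sub_kermxP; apply: gram_eq0.
  by rewrite trmx_mul trmxK mulmxA -(mulmxA _ M^T) mulmx_ker mul0mx.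
have := mxrankS ker_sub; rewrite !mxrank_ker mxrank_tr => ker_le.
apply/eqP; rewrite eqn_leq mxrankM_maxr /=.
have := rank_leq_col M; lia.
Qed.

(* The orthogonal projection of the row vector c onto the left kernel
   {z | z M = 0}, written with a pseudo-inverse of the Gram matrix. *)
Definition kerproj m q (M : 'M[R]_(m, q)) (c : 'rV[R]_m) : 'rV[R]_m :=
  c - (c *m M *m pinvmx (M^T *m M)) *m M^T.

Lemma kerproj_ker m q (M : 'M[R]_(m, q)) (c : 'rV[R]_m) : kerproj M c *m M = 0.
Proof.
have M_sub : (M <= M^T *m M)%MS.
  by rewrite -(mxrank_leqif_sup (submxMl _ _)).2 mxrank_gram.
rewrite /kerproj mulmxBl -[(_ *m M^T) *m M]mulmxA mulmxKpV ?subrr //.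
exact: submx_trans (submxMl _ _) M_sub.
Qed.

Lemma kerproj_nearest m q (M : 'M[R]_(m, q)) (c z : 'rV[R]_m) :
  z *m M = 0 -> sqnorm (c - kerproj M c) <= sqnorm (c - z).
Proof.
move=> zM0; set P := kerproj M c.
have resid : c - P = (c *m M *m pinvmx (M^T *m M)) *m M^T.
  by rewrite /P /kerproj opprB addrC subrK.
have orth : dot (c - P) (P - z) = 0.
  rewrite resid dot_trace trmx_mul trmxK -(mulmxA M) mxtrace_mulC.
  rewrite -(mulmxA _ (P - z)) mulmxBl.
  by rewrite kerproj_ker zM0 subrr mulmx0 mxtrace0.
have -> : c - z = (c - P) + (P - z) by rewrite addrA subrK.
by rewrite (sqnormD (c - P)) orth mulr0 addr0 lerDl sqnorm_ge0.
Qed.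

End KernelProjection.

Section NearestPointInCone.
Variable R : realFieldType.

Lemma ratio_test (I : finType) (a b : I -> R) (j1 : I) :
  (forall j, 0 <= a j) -> b j1 < 0 -> (forall j, b j < 0 -> 0 < a j) ->
  exists t, [/\ 0 <= t <= 1, forall j, 0 <= a j + t * (b j - a j)
            & exists2 j0, 0 < a j0 & a j0 + t * (b j0 - a j0) = 0].
Proof.
move=> a_ge0 bj1 a_pos; pose ratio j := a j / (a j - b j).
case: (@arg_minP _ R I j1 (fun j => b j < 0) ratio bj1) => j0 bj0 min_j0.
have aj0 := a_pos _ bj0; have gap0 : 0 < a j0 - b j0 by lra.
have ratio_ge0 : 0 <= ratio j0 by rewrite divr_ge0 ?ltW.
have ratio_le1 : ratio j0 <= 1 by rewrite ler_pdivrMr // mul1r; lra.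
exists (ratio j0); split.
- by rewrite ratio_ge0 ratio_le1.
- move=> j; case: (leP 0 (b j)) => bj; first by have := a_ge0 j; nra.
  have gap : 0 < a j - b j by have := a_pos _ bj; lra.
  have := min_j0 _ bj; rewrite [ratio j]/ratio ler_pdivlMr //; nra.
- by exists j0 => //; rewrite /ratio; field; rewrite gt_eqF.
Qed.

Section ActiveSets.
Variables (m p : nat) (G : 'M[R]_(m, p)) (c : 'rV[R]_m).

Definition feasible (x : 'rV[R]_m) : bool := [forall j, 0 <= (x *m G) 0 j].

Definition active (x : 'rV[R]_m) : {set 'I_p} := [set j | (x *m G) 0 j == 0].

Definition restrict (S : {set 'I_p}) : 'M[R]_(m, p) :=
  \matrix_(i, j) (if j \in S then G i j else 0).

Definition candidate (S : {set 'I_p}) : 'rV[R]_m := kerproj (restrict S) c.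

Lemma mul_restrict (x : 'rV[R]_m) (S : {set 'I_p}) j :
  (x *m restrict S) 0 j = if j \in S then (x *m G) 0 j else 0.
Proof.
rewrite !mxE; case: (boolP (j \in S)) => jS.
  by apply: eq_bigr => i _; rewrite mxE jS.
by rewrite big1 // => i _; rewrite mxE (negbTE jS) mulr0.
Qed.

Lemma candidate_active (S : {set 'I_p}) j : j \in S -> (candidate S *m G) 0 j = 0.
Proof.
move=> jS; have /rowP/(_ j) := kerproj_ker (restrict S) c.
by rewrite mul_restrict jS /candidate => ->; rewrite mxE.
Qed.

(* Since x itself is tight on its active set, the candidate is closer. *)
Lemma candidate_le x : sqnorm (c - candidate (active x)) <= sqnorm (c - x).
Proof.
apply: kerproj_nearest; apply/rowP => j; rewrite mul_restrict [RHS]mxE.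
by case: ifP => //; rewrite inE => /eqP.
Qed.

Lemma improve x : feasible x -> ~~ feasible (candidate (active x)) ->
  exists2 z, feasible z /\ sqnorm (c - z) <= sqnorm (c - x)
           & active x \proper active z.
Proof.
set y := candidate (active x) => x_feas.
rewrite /feasible negb_forall => /existsP [j1]; rewrite -ltNge => yj1.
pose a j := (x *m G) 0 j; pose b j := (y *m G) 0 j.
have a_ge0 j : 0 <= a j by move/forallP: x_feas.
have b_act j : a j = 0 -> b j = 0.
  by move=> aj0; apply: candidate_active; rewrite inE; apply/eqP.
have a_pos j : b j < 0 -> 0 < a j.
  move=> bj; rewrite lt_def (a_ge0 j) andbT.
  by apply: contraTneq bj => /b_act ->; rewrite ltxx.
have [t [/andP [t_ge0 t_le1] z_feas [j0 aj0 zj0]]] := ratio_test a_ge0 yj1 a_pos.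
pose z := (1 - t) *: x + t *: y.
have zG j : (z *m G) 0 j = a j + t * (b j - a j).
  by rewrite /a /b mulmxDl -!scalemxAl !mxE; ring.
exists z; first split.
- by apply/forallP => j; rewrite zG.
- have -> : c - z = (1 - t) *: (c - x) + t *: (c - y).
    by rewrite /z !scalerBr addrACA -scalerDl subrK scale1r opprD.
  have -> : sqnorm ((1 - t) *: (c - x) + t *: (c - y)) =
      (1 - t) * sqnorm (c - x) + t * sqnorm (c - y)
      - t * (1 - t) * sqnorm (c - x - (c - y)) by rewrite sqnorm_convex_gap addrK.
  have y_le : sqnorm (c - y) <= sqnorm (c - x) by apply: candidate_le.
  have : 0 <= t * (1 - t) * sqnorm (c - x - (c - y)).
    by rewrite !mulr_ge0 ?sqnorm_ge0 ?subr_ge0.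
  nra.
rewrite properEneq; apply/andP; split.
  apply/eqP => /setP/(_ j0); rewrite !inE zG zj0 eqxx.
  by rewrite /a in aj0; rewrite (gt_eqF aj0).
apply/subsetP => j; rewrite !inE => /eqP xj.
have aj : a j = 0 := xj.
by rewrite zG aj b_act // subrr mulr0 addr0.
Qed.

Lemma descend x : feasible x ->
  exists2 S, feasible (candidate S) & sqnorm (c - candidate S) <= sqnorm (c - x).
Proof.
have [r] := ubnP #|~: active x|; elim: r x => // r IH x lt_r x_feas.
have [y_feas|y_infeas] := boolP (feasible (candidate (active x))).
  by exists (active x) => //; apply: candidate_le.
have [z [z_feas le_zx] lt_xz] := improve x_feas y_infeas.
have [|S S_feas le_Sz] := IH z _ z_feas; last by exists S => //; apply: le_trans le_zx.
by move: lt_xz; rewrite -properC => /proper_card; lia.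
Qed.

(* Existence of a nearest point of the cone: the best of the finitely many
   feasible candidates. *)
Lemma nearest_exists : exists2 x, feasible x &
  forall w, feasible w -> sqnorm (c - x) <= sqnorm (c - w).
Proof.
have T_feas : feasible (candidate setT).
  by apply/forallP => j; rewrite candidate_active ?inE.
case: (@arg_minP _ R _ setT (fun S => feasible (candidate S))
          (fun S => sqnorm (c - candidate S)) T_feas) => S S_feas S_min.
exists (candidate S) => // w /descend [S' S'_feas le_S'w].
exact: le_trans (S_min _ S'_feas) le_S'w.
Qed.

End ActiveSets.
End NearestPointInCone.

Section NonnegativeApproximation.
Variable R : rcfType.

Lemma frob_sqnorm m n (M : 'M[R]_(m, n)) : frob_norm M ^+ 2 = sqnorm M.
Proof.
rewrite /frob_norm sqr_sqrtr; first by rewrite pair_big.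
by apply: sumr_ge0 => i _; apply: sumr_ge0 => j _; apply: sqr_ge0.
Qed.

Lemma sqnorm_mxvec m n (M : 'M[R]_(m, n)) : sqnorm (mxvec M) = sqnorm M.
Proof.
rewrite /sqnorm -(pair_big xpredT xpredT (fun i k => mxvec M i k ^+ 2)) /=.
rewrite big_ord1 (reindex _ (curry_mxvec_bij _ _)) /=.
by apply: eq_bigr => -[i j] _; rewrite mxvecE.
Qed.

Lemma feasible_mxvec d n k (Us : 'M[R]_(d, k)) (X : 'M[R]_(k, n)) :
  feasible (lin_mulmx Us) (mxvec X) <-> nonneg_mx (Us *m X).
Proof.
rewrite /feasible /lin_mulmx mul_vec_lin /=; split.
  by move/forallP => X_ge0 i j; have := X_ge0 (mxvec_index i j); rewrite mxvecE.
by move=> X_ge0; apply/forallP => l; case/mxvec_indexP: l => i j; rewrite mxvecE.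
Qed.

Lemma sqnorm_orth_mul d n k (Us : 'M[R]_(d, k)) (Y : 'M[R]_(k, n)) :
  Us^T *m Us = 1%:M -> sqnorm (Us *m Y) = sqnorm Y.
Proof.
move=> Us_orth; rewrite !sqnorm_dot !dot_trace trmx_mul.
by rewrite mulmxA -(mulmxA _ Us^T) Us_orth mulmx1.
Qed.

Lemma orth_decomp d n k (B : 'M[R]_(d, n)) (Us : 'M[R]_(d, k)) (X : 'M[R]_(k, n)) :
  Us^T *m Us = 1%:M ->
  sqnorm (B - Us *m X) = sqnorm (B - Us *m (Us^T *m B)) + sqnorm (Us^T *m B - X).
Proof.
move=> Us_orth; set P := B - Us *m (Us^T *m B).
have UsP : Us^T *m P = 0.
  by rewrite /P mulmxBr [Us^T *m (Us *m _)]mulmxA Us_orth mul1mx subrr.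
have -> : B - Us *m X = P + Us *m (Us^T *m B - X) by rewrite mulmxBr addrA subrK.
have orth : dot P (Us *m (Us^T *m B - X)) = 0.
  rewrite dot_trace mulmxA -[P^T *m Us]trmxK trmx_mul trmxK UsP.
  by rewrite trmx0 mul0mx mxtrace0.
by rewrite sqnormD orth mulr0 addr0 sqnorm_orth_mul.
Qed.

Lemma nn_minimizer_exists d n k (B : 'M[R]_(d, n)) (Us : 'M[R]_(d, k)) :
  Us^T *m Us = 1%:M -> exists V, nn_minimizer B Us V.
Proof.
move=> Us_orth.
have [x x_feas x_min] := nearest_exists (lin_mulmx Us) (mxvec (Us^T *m B)).
exists (vec_mx x)^T; split.
  by rewrite trmxK; apply/feasible_mxvec; rewrite vec_mxK.
move=> W W_nn; rewrite trmxK !frob_sqnorm.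
rewrite (orth_decomp B (vec_mx x) Us_orth) (orth_decomp B W^T Us_orth) lerD2l.
rewrite -[sqnorm (_ - vec_mx x)]sqnorm_mxvec -[sqnorm (_ - W^T)]sqnorm_mxvec.
rewrite !linearB /= vec_mxK.
by apply: x_min; apply/feasible_mxvec.
Qed.

(* If neither A1 nor A2 is farther from B than their midpoint, they are equal
   (the convexity identity at t = 1/2). *)
Lemma midpoint_unique d n (B A1 A2 : 'M[R]_(d, n)) :
  sqnorm (B - A1) <= sqnorm (B - 2^-1 *: (A1 + A2)) ->
  sqnorm (B - A2) <= sqnorm (B - 2^-1 *: (A1 + A2)) -> A1 = A2.
Proof.
have half : 1 - 2^-1 = 2^-1 :> R by lra.
have := sqnorm_convex_gap 2^-1 (B - A1) (B - A2); rewrite half.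
have -> : 2^-1 *: (B - A1) + 2^-1 *: (B - A2) = B - 2^-1 *: (A1 + A2).
  by apply/matrixP => i j; rewrite !mxE; lra.
have -> : B - A1 - (B - A2) = A2 - A1 by rewrite opprB addrC addrA subrK.
move=> gap le1 le2.
have dist0 : sqnorm (A2 - A1) = 0 by have := sqnorm_ge0 (A2 - A1); lra.
by apply/esym/eqP; rewrite -subr_eq0; apply/eqP/sqnorm_eq0.
Qed.

(* Frames with the same column space yield the same approximation: the
   midpoint of the two approximations is admissible for both problems. *)
Lemma same_span_minimizers d n k (B : 'M[R]_(d, n)) (Ua Ub : 'M[R]_(d, k))
    (Va Vb : 'M[R]_(n, k)) (Qa Qb : 'M[R]_k) :
  Ub = Ua *m Qa -> Ua = Ub *m Qb ->
  nn_minimizer B Ua Va -> nn_minimizer B Ub Vb -> Ua *m Va^T = Ub *m Vb^T.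
Proof.
move=> eUb eUa [nnA minA] [nnB minB].
set A := 2^-1 *: (Ua *m Va^T + Ub *m Vb^T).
have A_nn : nonneg_mx A.
  move=> i j; have := nnA i j; have := nnB i j; rewrite !mxE => ge0B ge0A.
  by rewrite mulr_ge0 ?invr_ge0 ?addr_ge0.
have A_Ua : Ua *m (2^-1 *: (Va^T + Qa *m Vb^T)) = A.
  by rewrite -scalemxAr mulmxDr mulmxA -eUb.
have A_Ub : Ub *m (2^-1 *: (Qb *m Va^T + Vb^T)) = A.
  by rewrite -scalemxAr mulmxDr mulmxA -eUa.
apply: (midpoint_unique (B := B)).
  have := minA (2^-1 *: (Va^T + Qa *m Vb^T))^T.
  by rewrite trmxK !frob_sqnorm A_Ua; apply.
have := minB (2^-1 *: (Qb *m Va^T + Vb^T))^T.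
by rewrite trmxK !frob_sqnorm A_Ub; apply.
Qed.

Lemma minimizer_unique d n k (B : 'M[R]_(d, n)) (Us : 'M[R]_(d, k))
    (V V' : 'M[R]_(n, k)) :
  Us^T *m Us = 1%:M -> nn_minimizer B Us V -> nn_minimizer B Us V' -> V = V'.
Proof.
move=> Us_orth minV minV'.
have := same_span_minimizers (esym (mulmx1 Us)) (esym (mulmx1 Us)) minV minV'.
move/(congr1 (mulmx Us^T)); rewrite !mulmxA Us_orth !mul1mx.
exact: trmx_inj.
Qed.

End NonnegativeApproximation.

Section SingularSubspace.
Variable R : rcfType.

Definition lead_cols d k (U : 'M[R]_(d, k.+1)) : 'M[R]_(d, k) :=
  \matrix_(i, j) U i (widen_ord (leqnSn k) j).

Lemma lead_cols_orth d k (U : 'M[R]_(d, k.+1)) :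
  U^T *m U = 1%:M -> (lead_cols U)^T *m lead_cols U = 1%:M.
Proof.
move=> /matrixP U_orth; apply/matrixP => i j.
have := U_orth (widen_ord (leqnSn k) i) (widen_ord (leqnSn k) j).
by rewrite !mxE => <-; apply: eq_bigr => l _; rewrite !mxE.
Qed.

Lemma left_sv_eigen d n (B : 'M[R]_(d, n)) sg u :
  left_singular_vector B sg u -> B *m B^T *m u = sg ^+ 2 *: u.
Proof.
case=> _ [v [_ [Bv Btu]]].
by rewrite -mulmxA Btu -scalemxAr Bv scalerA expr2.
Qed.

Lemma svd_gram d n r (B : 'M[R]_(d, n)) (s : 'I_r -> R) U (W : 'M[R]_(n, r)) :
  W^T *m W = 1%:M -> B = U *m diag_mx (\row_i s i) *m W^T ->
  B *m B^T = U *m (diag_mx (\row_i s i) *m diag_mx (\row_i s i)) *m U^T.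
Proof.
move=> W_orth ->; rewrite !trmx_mul trmxK tr_diag_mx.
by rewrite !mulmxA -(mulmxA _ W^T) W_orth mulmx1 -!mulmxA.
Qed.

(* An eigenvector of U D^2 U^T (U orthonormal) for a nonzero eigenvalue other
   than the last squared diagonal entry lies in the span of the first columns:
   its last coordinate in the frame U must vanish. *)
Lemma eigen_lead_span d k (U : 'M[R]_(d, k.+1)) (s : 'I_k.+1 -> R) (lam : R)
    (u : 'cV[R]_d) :
  U^T *m U = 1%:M ->
  U *m (diag_mx (\row_i s i) *m diag_mx (\row_i s i)) *m U^T *m u = lam *: u ->
  lam != 0 -> lam != s ord_max ^+ 2 ->
  exists z : 'cV[R]_k, u = lead_cols U *m z.
Proof.
set D := diag_mx _ => U_orth eig lam0 lam_max; set w := U^T *m u.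
have DDw : D *m D *m w = lam *: w.
  have := congr1 (mulmx U^T) eig.
  by rewrite !mulmxA U_orth mul1mx -!mulmxA -scalemxAr.
set y := lam^-1 *: (D *m D *m w).
have u_eq : u = U *m y.
  by rewrite -scalemxAr /w !mulmxA -(mulmxA U D D) eig scalerA mulVf // scale1r.
have DD_entry i : (D *m D *m w) i 0 = s i ^+ 2 * w i 0.
  by rewrite -mulmxA !mul_diag_mx !mxE mulrA expr2.
have y_max : y ord_max 0 = 0.
  have := congr1 (fun M : 'cV[R]_k.+1 => M ord_max 0) DDw.
  rewrite /= DD_entry [RHS]mxE => DD_max.
  have /eqP : (s ord_max ^+ 2 - lam) * w ord_max 0 = 0 by rewrite mulrBl DD_max subrr.
  rewrite mulf_eq0 subr_eq0 eq_sym (negbTE lam_max) /= => /eqP w0.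
  by rewrite mxE DD_entry w0 !mulr0.
exists (\col_l y (widen_ord (leqnSn k) l) 0).
apply/matrixP => i j; rewrite ord1 {1}u_eq !mxE big_ord_recr /= y_max mulr0 addr0.
by apply: eq_bigr => l _; rewrite !mxE.
Qed.

Lemma cols_in_span d k q (M : 'M[R]_(d, q)) (Us : 'M[R]_(d, k)) :
  (forall j : 'I_k, exists z : 'cV[R]_q, col j Us = M *m z) ->
  exists Z : 'M[R]_(q, k), Us = M *m Z.
Proof.
move=> in_span; have [z z_eq] := fin_all_exists in_span.
exists (\matrix_(l, j) z j l 0); apply/matrixP => i j.
have := congr1 (fun N : 'cV[R]_d => N i 0) (z_eq j).
by rewrite /= !mxE => ->; apply: eq_bigr => l _; rewrite !mxE.
Qed.

Lemma singular_frame d n k (B : 'M[R]_(d, n)) (s : 'I_k.+1 -> R)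
    (U : 'M[R]_(d, k.+1)) (W : 'M[R]_(n, k.+1)) (Us : 'M[R]_(d, k)) :
  U^T *m U = 1%:M -> W^T *m W = 1%:M -> B = U *m diag_mx (\row_i s i) *m W^T ->
  (forall j : 'I_k, 0 < s ord_max < s (widen_ord (leqnSn k) j)) ->
  Us^T *m Us = 1%:M ->
  (forall j : 'I_k, left_singular_vector B (s (widen_ord (leqnSn k) j)) (col j Us)) ->
  exists2 Z : 'M[R]_k, Us = lead_cols U *m Z & Z *m Z^T = 1%:M.
Proof.
move=> U_orth W_orth svdB gap Us_orth Us_sv.
have [Z Us_eq] : exists Z, Us = lead_cols U *m Z.
  apply: cols_in_span => j; have /andP [s_pos s_gt] := gap j.
  apply: (eigen_lead_span (s := s) (lam := s (widen_ord (leqnSn k) j) ^+ 2) U_orth).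
  - by rewrite -(svd_gram W_orth svdB) (left_sv_eigen (Us_sv j)).
  - by rewrite expf_neq0 // gt_eqF // (lt_trans s_pos).
  - by rewrite gt_eqF //; nra.
exists Z => //; apply: mulmx1C.
rewrite -Us_orth Us_eq trmx_mul -mulmxA (mulmxA _ (lead_cols U)).
by rewrite lead_cols_orth // mul1mx.
Qed.

End SingularSubspace.

Theorem proposition2 (R : rcfType) (d n k : nat) (B : 'M[R]_(d, n))
    (s : 'I_k.+1 -> R) :
  (1 <= k)%N ->
  nonneg_mx B ->
  \rank B = k.+1 ->
  nz_singular_values B s ->
  s (inord k.-1) > s ord_max ->
  (forall Us : 'M[R]_(d, k),
      Us^T *m Us = 1%:M ->
      (forall j : 'I_k,
          left_singular_vector B (s (widen_ord (leqnSn k) j)) (col j Us)) ->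
      exists! V : 'M[R]_(n, k), nn_minimizer B Us V) /\
  (forall (Us1 Us2 : 'M[R]_(d, k)) (V1 V2 : 'M[R]_(n, k)),
      Us1^T *m Us1 = 1%:M ->
      (forall j : 'I_k,
          left_singular_vector B (s (widen_ord (leqnSn k) j)) (col j Us1)) ->
      Us2^T *m Us2 = 1%:M ->
      (forall j : 'I_k,
          left_singular_vector B (s (widen_ord (leqnSn k) j)) (col j Us2)) ->
      nn_minimizer B Us1 V1 -> nn_minimizer B Us2 V2 ->
      Us1 *m V1^T = Us2 *m V2^T).
Proof.
move=> k_ge1 _ _ [s_dec [s_pos [U [W [U_orth [W_orth svdB]]]]]] gap; split.
  move=> Us Us_orth _; have [V minV] := nn_minimizer_exists B Us_orth.
  by exists V; split=> // V'; apply: minimizer_unique.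
have lead_gap j : 0 < s ord_max < s (widen_ord (leqnSn k) j).
  rewrite s_pos (lt_le_trans gap) // s_dec //= inordK; last by rewrite ltnS leq_pred.
  by rewrite -ltnS prednK.
move=> Us1 Us2 V1 V2 o1 sv1 o2 sv2 min1 min2.
have [Z1 e1 Z1o] := singular_frame U_orth W_orth svdB lead_gap o1 sv1.
have [Z2 e2 Z2o] := singular_frame U_orth W_orth svdB lead_gap o2 sv2.
apply: (same_span_minimizers (Qa := Z1^T *m Z2) (Qb := Z2^T *m Z1) _ _ min1 min2).
  by rewrite e1 e2 -mulmxA [Z1 *m _]mulmxA Z1o mul1mx.
by rewrite e1 e2 -mulmxA [Z2 *m _]mulmxA Z2o mul1mx.
Qed.
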